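(* Let $k\ge1$, work in $\mathbb{R}^{k+1}$ with standard basis $e_1,\dots,e_{k+1}$ (coordinates ordered as $(\mu_1,\dots,\mu_k,s)$), and for $i\ge1$ let \[ P_i=\mathrm{Conv}\Big(\{0\}\cup\{(i-2j)\,e_\ell+j\,e_{k+1}:\ \ell\in[k],\ 0\le j\le\lfloor i/2\rfloor\}\Big), \] the Newton polytope of $\sum_{\ell=1}^k\bar\lambda_\ell M_i(\mu_\ell,s)-\bar m_i$ for nonzero $\bar\lambda_\ell,\bar m_i$. Define line segments $Q_1=\mathrm{Conv}\{0,e_1\}$, $Q_2=\mathrm{Conv}\{0,e_{k+1}\}$, and $Q_i=\mathrm{Conv}\{0,\,i\,e_{i-1}\}$ for $3\le i\le k+1$. Then for every nonzero $w\in\mathbb{R}^{k+1}$ the set \[ \mathcal I_w=\{i\in[k+1]:\ Q_i\cap\mathrm{Init}_w(P_i)\neq\emptyset\} \] is nonempty.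
   Context: Define polynomials $M_i(\mu,s)$ for $i\ge 0$ by $M_0=1$, $M_1=\mu$, $M_i=\mu M_{i-1}+(i-1)\,s\,M_{i-2}$ for $i\ge2$. For $w\in\mathbb{R}^n$ and a convex polytope $P$, $\mathrm{Init}_w(P)=\{x\in P:\langle w,x\rangle\le\langle w,y\rangle\ \forall y\in P\}$ is the face where $\langle w,\cdot\rangle$ is minimized. *)

(* Points of R^(k+1) are row vectors 'rV[R]_(k.+1);
   coordinate index l : 'I_(k.+1) with l < k <-> mu_(l+1), index k <-> s. *)
From HB Require Import structures.
From mathcomp Require Import all_boot all_order all_algebra.
From mathcomp Require Import reals.
Set Implicit Arguments. Unset Strict Implicit. Unset Printing Implicit Defensive.
Import Order.TTheory GRing.Theory Num.Theory.
Local Open Scope ring_scope.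

Section Defs.
Variable R : realType.

Definition conv (n : nat) (S : seq 'rV[R]_n) (x : 'rV[R]_n) : Prop :=
  exists c : 'I_(size S) -> R,
    (forall i, 0 <= c i) /\ \sum_i c i = 1 /\ x = \sum_i c i *: S`_i.

Definition dotv (n : nat) (w x : 'rV[R]_n) : R := \sum_i w 0 i * x 0 i.

Definition Init (n : nat) (w : 'rV[R]_n) (P : 'rV[R]_n -> Prop) (x : 'rV[R]_n) : Prop :=
  P x /\ forall y, P y -> dotv w x <= dotv w y.

(* standard basis vector with 0-based index *)
Definition ebas (n : nat) (l : 'I_n) : 'rV[R]_n := delta_mx 0 l.

Definition Ppts (k i : nat) : seq 'rV[R]_(k.+1) :=
  0 :: [seq ((i - 2 * j)%:R *: ebas (widen_ord (leqnSn k) l)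
             + j%:R *: ebas (@ord_max k))
       | l <- enum 'I_k, j <- iota 0 (i./2).+1].

(* nonzero endpoint of the segment Q_i (1-based i):
   Q_1 = [0,e_1], Q_2 = [0,e_(k+1)], Q_i = [0, i e_(i-1)] for 3 <= i <= k+1 *)
Definition Qend (k i : nat) : 'rV[R]_(k.+1) :=
  if i == 1%N then ebas (@ord0 k)
  else if i == 2%N then ebas (@ord_max k)
  else i%:R *: ebas (@inord k (i - 2)).

Definition Qseg (k i : nat) : seq 'rV[R]_(k.+1) := [:: 0; Qend k i].

End Defs.

From HB Require Import structures.
From mathcomp Require Import all_boot all_order all_algebra.
From mathcomp Require Import reals.
From mathcomp Require Import lra zify.
Import Order.TTheory GRing.Theory Num.Theory.
Local Open Scope ring_scope.

(* Write a_l = w_l (l < k) for the mu-coordinates of w, b = w_(k+1) for its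
   s-coordinate, and let m = a_(l0) be the least of the a_l.  On the vertex
   (i-2j) e_l + j e_(k+1) of P_i the functional <w,.> takes the value
   (i-2j) a_l + j b, and it vanishes on the vertex 0.  Since a linear
   functional attains its minimum over a polytope at a vertex, it suffices to
   exhibit, for a suitable i, a vertex of P_i lying on Q_i and minimizing <w,.>
   among the vertices of P_i.  Three cases cover all w:
   - a_l >= 0 and b >= 0: all vertex values are >= 0, so 0 works for i = 1;
   - b < 0 and b < 2m: for i = 2 the vertex e_(k+1) has the least value b;
   - otherwise m < 0 and 2m <= b, so every vertex value of P_i is >= i*m,
     attained at i e_(l0); choosing i = 1 if l0 = 0 and i = l0 + 2 otherwise
     puts this vertex on the segment Q_i. *)

Section InnerProduct.
Variable R : realType.

Lemma dotvD n (w x y : 'rV[R]_n) : dotv w (x + y) = dotv w x + dotv w y.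
Proof. by rewrite /dotv -big_split; apply: eq_bigr => i _; rewrite mxE mulrDr. Qed.

Lemma dotvZ n (w x : 'rV[R]_n) a : dotv w (a *: x) = a * dotv w x.
Proof. by rewrite /dotv mulr_sumr; apply: eq_bigr => i _; rewrite mxE mulrCA. Qed.

Lemma dotv0 n (w : 'rV[R]_n) : dotv w 0 = 0.
Proof. by rewrite /dotv big1 // => i _; rewrite mxE mulr0. Qed.

Lemma dotv_ebas n (w : 'rV[R]_n) l : dotv w (ebas R l) = w 0 l.
Proof.
rewrite /dotv /ebas (bigD1 l) //= big1 ?addr0; first by rewrite mxE !eqxx mulr1.
by move=> j /negbTE hj; rewrite mxE hj andbF mulr0.
Qed.

Lemma dotv_sum n m (w : 'rV[R]_n) (c : 'I_m -> R) (S : 'I_m -> 'rV[R]_n) :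
  dotv w (\sum_i c i *: S i) = \sum_i c i * dotv w (S i).
Proof.
apply: (big_ind2 (fun x y => dotv w x = y)); first exact: dotv0.
  by move=> x1 x2 y1 y2 <- <-; rewrite dotvD.
by move=> i _; rewrite dotvZ.
Qed.

End InnerProduct.

Section ConvexHull.
Variable R : realType.

Lemma conv_vertex n (S : seq 'rV[R]_n) x : x \in S -> conv S x.
Proof.
move=> xS; have hi : (index x S < size S)%N by rewrite index_mem.
exists (fun i => (i == Ordinal hi)%:R); split; first by move=> i; exact: ler0n.
split.
  by rewrite (bigD1 (Ordinal hi)) //= eqxx big1 ?addr0 // => i /negbTE ->.
rewrite (bigD1 (Ordinal hi)) //= eqxx scale1r nth_index // big1 ?addr0 //.
by move=> i /negbTE ->; rewrite scale0r.
Qed.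

(* Minimization principle: a listed point minimizing <w,.> over the list
   minimizes it over the whole convex hull, since a convex combination of
   values bounded below by a constant is bounded below by that constant. *)
Lemma Init_vertex n (w : 'rV[R]_n) (S : seq 'rV[R]_n) v :
  v \in S -> (forall s, s \in S -> dotv w v <= dotv w s) -> Init w (conv S) v.
Proof.
move=> vS v_min; split=> [|y [c [c_ge0 [c_sum ->]]]]; first exact: conv_vertex.
rewrite dotv_sum -[dotv w v]mul1r -c_sum mulr_suml.
by apply: ler_sum => i _; apply: ler_wpM2l; [exact: c_ge0 | exact/v_min/mem_nth].
Qed.

End ConvexHull.

Section NewtonPolytope.
Variables (R : realType) (k : nat) (w : 'rV[R]_k.+1).

Definition mu_w (l : 'I_k) : R := w 0 (widen_ord (leqnSn k) l).
Definition s_w : R := w 0 ord_max.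

Definition Pvert (i : nat) (l : 'I_k) (j : nat) : 'rV[R]_k.+1 :=
  (i - 2 * j)%:R *: ebas R (widen_ord (leqnSn k) l) + j%:R *: ebas R ord_max.

Lemma mem_iota_half i j : (j \in iota 0 (i./2).+1) = (2 * j <= i)%N.
Proof.
rewrite mem_iota add0n ltnS; have := odd_double_half i; rewrite -muln2.
by case: (odd i) => /= hi; apply/idP/idP; lia.
Qed.

Lemma Pvert_in i l j : (2 * j <= i)%N -> Pvert i l j \in Ppts R k i.
Proof.
move=> hj; rewrite inE; apply/orP; right; apply/allpairsP.
by exists (l, j); rewrite mem_enum mem_iota_half.
Qed.

Lemma dotv_Pvert i l j : (2 * j <= i)%N ->
  dotv w (Pvert i l j) = (i%:R - 2 * j%:R) * mu_w l + j%:R * s_w.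
Proof. by move=> hj; rewrite dotvD !dotvZ !dotv_ebas natrB // natrM. Qed.

Lemma Ppts_lower_bound i L : L <= 0 ->
    (forall l j, (2 * j <= i)%N -> L <= (i%:R - 2 * j%:R) * mu_w l + j%:R * s_w) ->
  forall s, s \in Ppts R k i -> L <= dotv w s.
Proof.
move=> L_le0 L_le s; rewrite inE => /orP [/eqP ->|]; first by rewrite dotv0.
move=> /allpairsP [[l j] [_ /= hj ->]]; rewrite mem_iota_half in hj.
by rewrite -/(Pvert i l j) dotv_Pvert //; exact: L_le.
Qed.

Lemma vertex_coef_ge0 {i j : nat} : (2 * j <= i)%N -> 0 <= (i%:R - 2 * j%:R :> R).
Proof. by move=> hj; rewrite -natrM -natrB // ler0n. Qed.

Definition axis_index (l : 'I_k) : nat := if val l == 0%N then 1%N else (l + 2)%N.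

Lemma axis_index_range l : (1 <= axis_index l <= k.+1)%N.
Proof. by rewrite /axis_index; case: eqP => _ //; have := ltn_ord l; lia. Qed.

Lemma Qend_axis_index l :
  Qend R k (axis_index l) = (axis_index l)%:R *: ebas R (widen_ord (leqnSn k) l).
Proof.
rewrite /axis_index; case: eqP => [l0|l_ne0]; rewrite /Qend /=.
  by rewrite scale1r; congr ebas; apply: val_inj; rewrite /= l0.
move: l_ne0 => /= l_ne0.
have -> : ((l + 2)%N == 1%N) = false by apply/negbTE; lia.
have -> : ((l + 2)%N == 2%N) = false by apply/negbTE; lia.
congr (_ *: ebas R _); apply: val_inj => /=.
by rewrite inordK addnK //; exact: leq_trans (ltn_ord l) (leqnSn k).
Qed.

Lemma origin_minimal i : (forall l, 0 <= mu_w l) -> 0 <= s_w ->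
  conv (Qseg R k i) 0 /\ Init w (conv (Ppts R k i)) 0.
Proof.
move=> mu_ge0 s_ge0; split; first by apply: conv_vertex; rewrite inE eqxx.
apply: Init_vertex; first by rewrite inE eqxx.
rewrite dotv0; apply: Ppts_lower_bound => // l j hj.
have := vertex_coef_ge0 hj; have := mu_ge0 l; have : 0 <= (j%:R : R) by [].
nra.
Qed.

Lemma last_axis_minimal (l0 : 'I_k) : s_w < 0 -> (forall l, s_w < 2 * mu_w l) ->
  conv (Qseg R k 2) (ebas R ord_max) /\ Init w (conv (Ppts R k 2)) (ebas R ord_max).
Proof.
move=> s_lt0 s_lt; split; first by apply: conv_vertex; rewrite !inE eqxx orbT.
have -> : ebas R ord_max = Pvert 2 l0 1 by rewrite /Pvert subnn scale0r add0r scale1r.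
apply: Init_vertex; first exact: Pvert_in.
rewrite dotv_Pvert // mulr1n mulr1 subrr mul0r add0r mul1r.
apply: Ppts_lower_bound => [|l j hj]; first exact: ltW.
have := s_lt l; have : (j%:R : R) <= 1%:R by rewrite ler_nat; lia.
have : 0 <= (j%:R : R) by [].
nra.
Qed.

Lemma scaled_axis_minimal (l0 : 'I_k) i : (forall l, mu_w l0 <= mu_w l) ->
    mu_w l0 < 0 -> 2 * mu_w l0 <= s_w ->
  Init w (conv (Ppts R k i)) (i%:R *: ebas R (widen_ord (leqnSn k) l0)).
Proof.
move=> l0_min m_lt0 m_le_s.
have -> : i%:R *: ebas R (widen_ord (leqnSn k) l0) = Pvert i l0 0.
  by rewrite /Pvert muln0 subn0 scale0r addr0.
apply: Init_vertex; first exact: Pvert_in.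
rewrite dotv_Pvert // mulr0 subr0 mul0r addr0.
apply: Ppts_lower_bound => [|l j hj]; first exact: mulr_ge0_le0 (ler0n _ _) (ltW m_lt0).
have := vertex_coef_ge0 hj; have := l0_min l; have : 0 <= (j%:R : R) by [].
nra.
Qed.

End NewtonPolytope.
Arguments mu_w {R k} w l.
Arguments s_w {R k} w.
Arguments axis_index {k} l.

Theorem mainTheorem8 (R : realType) (k : nat) (hk : (1 <= k)%N)
  (w : 'rV[R]_(k.+1)) (hw : w != 0) :
  exists i : nat, (1 <= i <= k.+1)%N /\
    exists x : 'rV[R]_(k.+1),
      conv (Qseg R k i) x /\ Init w (conv (Ppts R k i)) x.
Proof.
have [l0 _ l0_min] := @arg_minP _ R 'I_k (Ordinal hk) xpredT (mu_w w) isT.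
have {}l0_min l : mu_w w l0 <= mu_w w l by exact: l0_min.
have [/andP [m_ge0 s_ge0] | not_origin] := boolP ((0 <= mu_w w l0) && (0 <= s_w w)).
  exists 1%N; split=> //; exists 0; apply: origin_minimal => // l.
  exact: le_trans m_ge0 (l0_min l).
have [/andP [s_lt s_lt0] | not_last] := boolP ((s_w w < 2 * mu_w w l0) && (s_w w < 0)).
  exists 2%N; split=> //; exists (ebas R ord_max); apply: last_axis_minimal => // l.
  by apply: lt_le_trans s_lt _; rewrite ler_pM2l // l0_min.
have m_le_s : 2 * mu_w w l0 <= s_w w.
  by move: not_origin not_last; case: (leP 0 (mu_w w l0)); case: (leP 0 (s_w w)) => /=; lra.
have m_lt0 : mu_w w l0 < 0.
  by move: not_origin m_le_s; case: (leP 0 (mu_w w l0)); case: (leP 0 (s_w w)) => /=; lra.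
exists (axis_index l0); split; first exact: axis_index_range.
exists (Qend R k (axis_index l0)); split; first by apply: conv_vertex; rewrite !inE eqxx orbT.
by rewrite Qend_axis_index; exact: scaled_axis_minimal.
Qed.
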